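(* Let $1 \to N \xrightarrow{i} G \xrightarrow{p} Q \to 1$ be a short exact sequence of groups, where $Q$ is arbitrary and $\nu(N) = 0$. Then $\nu(G) \le \nu(Q)$, with equality if the extension is split or central.
   Context: For a group $G$, the free subgroup rank is $\nu(G) = \max\{ n \ge 0 : (F_2)^n \text{ embeds into } G\} \in \mathbb{N}_0 \cup \{\infty\}$, where $F_2$ is the free group of rank two and $(F_2)^n$ is the $n$-fold direct product. The extension is central if $i(N)$ lies in the center of $G$, and split if $p$ admits a homomorphic section $Q \to G$. *)

From mathcomp Require Import all_boot.
From Stdlib Require Import ClassicalEpsilon FunctionalExtensionality.

Set Implicit Arguments.
Unset Strict Implicit.
Unset Printing Implicit Defensive.

Record group := Group {
  carrier :> Type;
  gmul : carrier -> carrier -> carrier;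
  gone : carrier;
  ginv : carrier -> carrier;
  gmulA : forall x y z, gmul x (gmul y z) = gmul (gmul x y) z;
  gmul1g : forall x, gmul gone x = x;
  gmulVg : forall x, gmul (ginv x) x = gone }.

Arguments gmul {g}.
Arguments gone {g}.
Arguments ginv {g}.

Definition is_hom (G H : group) (f : G -> H) : Prop :=
  forall x y, f (gmul x y) = gmul (f x) (f y).

Definition short_exact (N G Q : group) (i : N -> G) (p : G -> Q) : Prop :=
  [/\ is_hom i, is_hom p, injective i,
      (forall q : Q, exists g : G, p g = q) &
      (forall g : G, p g = gone <-> exists n : N, i n = g)].

Definition central_ext (N G : group) (i : N -> G) : Prop :=
  forall (n : N) (g : G), gmul (i n) g = gmul g (i n).

Definition split_ext (G Q : group) (p : G -> Q) : Prop :=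
  exists s : Q -> G, is_hom s /\ forall q, p (s q) = q.

(* The free group F_2 on two generators, as freely reduced words.      *)
(* A letter is (generator, inverted?).                                *)
Definition letter := (bool * bool)%type.
Definition linv (x : letter) : letter := (x.1, ~~ x.2).

Fixpoint reduced (w : seq letter) : bool :=
  match w with
  | x :: ((y :: _) as w') => (y != linv x) && reduced w'
  | _ => true
  end.

Definition cr (x : letter) (w : seq letter) : seq letter :=
  match w with
  | y :: w' => if y == linv x then w' else x :: w
  | [::] => [:: x]
  end.

Definition wmul (u v : seq letter) : seq letter := foldr cr v u.
Definition winv (u : seq letter) : seq letter := wmul (rev (map linv u)) [::].

Lemma linvK (x : letter) : linv (linv x) = x.
Proof. by case: x => a b; rewrite /linv /= negbK. Qed.

Lemma reduced_cr x w : reduced w -> reduced (cr x w).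
Proof.
case: w => [|y w] //= Hw.
case: ifP => Hy; first by case: w Hw => [|z w] // /andP[].
by rewrite /= Hy Hw.
Qed.

Lemma reduced_wmul u v : reduced v -> reduced (wmul u v).
Proof. by elim: u => [|x u IH] //= Hv; apply: reduced_cr; apply: IH. Qed.

Lemma reduced_tail x w : reduced (x :: w) -> reduced w.
Proof. by case: w => [|y w] //= /andP[]. Qed.

Lemma cr_cancel x w : reduced w -> cr x (cr (linv x) w) = w.
Proof.
case: w => [|y w] /=; first by rewrite eqxx.
case: ifP => [/eqP -> | Hy] Hw.
  rewrite linvK; case: w Hw => [|z w] //=.
  by rewrite linvK => /andP[Hz _]; rewrite (negbTE Hz).
by rewrite /= eqxx.
Qed.

Lemma wmul_cr x v w : reduced v -> reduced w ->
  wmul (cr x v) w = cr x (wmul v w).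
Proof.
case: v => [|y v] //= Hv Hw.
case: ifP => [/eqP -> | _] //=.
by rewrite cr_cancel //; apply: reduced_wmul.
Qed.

Lemma wmulA u v w : reduced v -> reduced w ->
  wmul u (wmul v w) = wmul (wmul u v) w.
Proof.
move=> Hv Hw; elim: u => [|x u IH] //=.
by rewrite wmul_cr ?IH //; apply: reduced_wmul.
Qed.

Lemma wmulV u : reduced u -> wmul (winv u) u = [::].
Proof.
move=> Hu; rewrite /winv -wmulA //.
elim: u Hu => [|x u IH] Hu //=.
rewrite rev_cons /wmul foldr_rcons /= linvK eqxx.
by apply: IH; apply: reduced_tail Hu.
Qed.

Definition F2T := {w : seq letter | reduced w}.

Definition F2mul (u v : F2T) : F2T :=
  exist _ (wmul (sval u) (sval v)) (reduced_wmul (sval u) (svalP v)).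
Definition F2one : F2T := exist _ [::] isT.
Definition F2inv (u : F2T) : F2T :=
  exist _ (winv (sval u)) (reduced_wmul _ (isT : reduced [::])).

Lemma F2_eq (u v : F2T) : sval u = sval v -> u = v.
Proof.
case: u v => [u pu] [v pv] /= E; subst v.
by rewrite (eq_irrelevance pu pv).
Qed.

Lemma F2mulA (x y z : F2T) : F2mul x (F2mul y z) = F2mul (F2mul x y) z.
Proof. by apply: F2_eq; rewrite /= (wmulA _ (svalP y) (svalP z)). Qed.

Lemma F2mul1 (x : F2T) : F2mul F2one x = x.
Proof. by apply: F2_eq. Qed.

Lemma F2mulV (x : F2T) : F2mul (F2inv x) x = F2one.
Proof. by apply: F2_eq; rewrite /= (wmulV (svalP x)). Qed.

Definition F2 : group := Group F2mulA F2mul1 F2mulV.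

Section Power.
Variables (H : group) (n : nat).
Definition pmul (f g : 'I_n -> H) : 'I_n -> H := fun k => gmul (f k) (g k).
Definition pone : 'I_n -> H := fun _ => gone.
Definition pinv (f : 'I_n -> H) : 'I_n -> H := fun k => ginv (f k).
Lemma pmulA f g h : pmul f (pmul g h) = pmul (pmul f g) h.
Proof. by apply: functional_extensionality => k; rewrite /pmul gmulA. Qed.
Lemma pmul1 f : pmul pone f = f.
Proof. by apply: functional_extensionality => k; rewrite /pmul gmul1g. Qed.
Lemma pmulV f : pmul (pinv f) f = pone.
Proof. by apply: functional_extensionality => k; rewrite /pmul gmulVg. Qed.
Definition gpower : group := Group pmulA pmul1 pmulV.
End Power.

Definition embeds (n : nat) (G : group) : Prop :=
  exists f : gpower F2 n -> G, is_hom f /\ injective f.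

(* Free subgroup rank nu(G) in N_0 \cup {oo}; None encodes oo.         *)
Definition is_nu (G : group) (x : option nat) : Prop :=
  match x with
  | Some n => embeds n G /\ (forall m, embeds m G -> m <= n)
  | None => forall n, exists m, n <= m /\ embeds m G
  end.

Definition nu (G : group) : option nat := epsilon (inhabits None) (is_nu G).

Definition le_enat (x y : option nat) : Prop :=
  match x, y with
  | _, None => True
  | None, Some _ => False
  | Some a, Some b => a <= b
  end.

From mathcomp Require Import all_boot.
From Stdlib Require Import ClassicalEpsilon FunctionalExtensionality Classical.

(* If f embeds (F_2)^n in G, then so does p o f. Otherwise p (f k) = 1 for some k <> 1; pick a
   coordinate w = k_j <> 1. The image of w in the j-th coordinate then commutes with the image of
   that whole coordinate, so p o f kills every w^T (w^S)^-1. Choosing the conjugators T, S so that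
   no cancellation occurs, ping-pong gives two such elements generating a free group of rank two,
   whose image under f lies in i(N): impossible when nu(N) = 0. Hence nu(G) <= nu(Q).
   Conversely, a homomorphic section lifts embeddings of (F_2)^n directly. For a central extension,
   lift each coordinate copy of F_2 to G arbitrarily: lifts of distinct coordinates commute up to
   central elements, so their restrictions to the free subgroup generated by [a^-1, b^-1] and
   [a, b] commute exactly, and their product is an embedding of (F_2)^n. *)

Set Implicit Arguments.
Unset Strict Implicit.
Unset Printing Implicit Defensive.

Section GroupTheory.
Variable G : group.
Implicit Types x y z : G.

Lemma gmulgV x : gmul x (ginv x) = gone.
Proof.
have idem : gmul (gmul x (ginv x)) (gmul x (ginv x)) = gmul x (ginv x).
  by rewrite -gmulA (gmulA (ginv x)) gmulVg gmul1g.
by rewrite -[LHS]gmul1g -(gmulVg (gmul x (ginv x))) -gmulA idem gmulVg.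
Qed.

Lemma gmulg1 x : gmul x gone = x.
Proof. by rewrite -(gmulVg x) gmulA gmulgV gmul1g. Qed.

Lemma gmulKg x y : gmul (ginv x) (gmul x y) = y.
Proof. by rewrite gmulA gmulVg gmul1g. Qed.

Lemma gmulKVg x y : gmul x (gmul (ginv x) y) = y.
Proof. by rewrite gmulA gmulgV gmul1g. Qed.

Lemma gmulI x : injective (gmul x).
Proof. by move=> y z E; rewrite -(gmulKg x y) E gmulKg. Qed.

Lemma gmul_eq1V x y : gmul x y = gone -> x = ginv y.
Proof. by move=> E; rewrite -[x]gmulg1 -(gmulgV y) gmulA E gmul1g. Qed.

Lemma ginvK x : ginv (ginv x) = x.
Proof. by apply/esym/gmul_eq1V; rewrite gmulgV. Qed.

Lemma ginvM x y : ginv (gmul x y) = gmul (ginv y) (ginv x).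
Proof.
by apply/esym/gmul_eq1V; rewrite -gmulA (gmulA (ginv x)) gmulVg gmul1g gmulVg.
Qed.

Definition gcommute x y := gmul x y = gmul y x.
Definition gcentral z := forall y, gcommute z y.
Definition gcomm x y := gmul (ginv x) (gmul (ginv y) (gmul x y)).
Definition gconj x y := gmul (ginv y) (gmul x y).

(* [conjdiv w T S] is [w^T (w^S)^-1]. *)
Definition conjdiv (w T S : G) : G :=
  gmul (ginv T) (gmul w (gmul T (gmul (ginv S) (gmul (ginv w) S)))).

Lemma gcommute_sym x y : gcommute x y -> gcommute y x.
Proof. by []. Qed.

Lemma gcommute1 x : gcommute gone x.
Proof. by rewrite /gcommute gmul1g gmulg1. Qed.

Lemma gcommuteM x y z : gcommute x z -> gcommute y z -> gcommute (gmul x y) z.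
Proof. by move=> xz yz; rewrite /gcommute -gmulA yz gmulA xz -gmulA. Qed.

Lemma gcommuteV x y : gcommute x y -> gcommute (ginv x) y.
Proof.
rewrite /gcommute => xy; apply: (@gmulI x).
by rewrite gmulKVg gmulA xy -gmulA gmulgV gmulg1.
Qed.

Lemma gcomm_eq1 x y : gcomm x y = gone -> gcommute x y.
Proof.
move=> E; have : gmul (gmul y x) (gcomm x y) = gmul x y.
  by rewrite /gcomm -gmulA !gmulKVg.
by rewrite E gmulg1.
Qed.

Lemma gcomm1g x : gcomm gone x = gone.
Proof. by rewrite /gcomm gmul1g !gmulVg. Qed.

Lemma gcommg1 x : gcomm x gone = gone.
Proof. by rewrite /gcomm -(gmul_eq1V (gmul1g gone)) gmulg1 gmul1g gmulVg. Qed.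

Lemma gconj_id x y : gcommute y x -> gconj x y = x.
Proof. by rewrite /gconj => <-; rewrite gmulKg. Qed.

Lemma gconj_eq x y : gconj x y = x -> gcommute x y.
Proof. by move=> E; rewrite /gcommute -{2}E /gconj gmulKVg. Qed.

Lemma conjdiv_eq1 w T S : gcommute w T -> gcommute w S -> conjdiv w T S = gone.
Proof.
move=> wT wS; rewrite /conjdiv (gmulA w T) wT -gmulA gmulKg (gmulA w).
by rewrite -(gcommuteV (gcommute_sym wS)) -gmulA gmulKVg gmulVg.
Qed.

Lemma gmul_gcomm x y : gmul x (gcomm x y) = gconj x y.
Proof. by rewrite /gcomm gmulKVg. Qed.

Lemma gcomm_mull_central x y z : gcentral z -> gcomm (gmul x z) y = gcomm x y.
Proof.
move=> cz; rewrite -(gconj_id (cz (gcomm x y))).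
by rewrite /gcomm /gconj ginvM -(gmulA x z y) (cz y) !gmulA.
Qed.

Lemma gcomm_mulr_central x y z : gcentral z -> gcomm x (gmul y z) = gcomm x y.
Proof.
move=> cz; have czV : gcentral (ginv z) by move=> t; apply: gcommuteV.
rewrite -(gconj_id (cz (gcomm x y))).
by rewrite /gcomm /gconj ginvM !gmulA -(czV (ginv x)).
Qed.

End GroupTheory.

Section Homomorphisms.
Variables (G H : group) (f : G -> H).
Hypothesis hom_f : is_hom f.

Lemma hom1 : f gone = gone.
Proof. by apply: (@gmulI _ (f gone)); rewrite -hom_f gmul1g gmulg1. Qed.

Lemma homV x : f (ginv x) = ginv (f x).
Proof. by apply: gmul_eq1V; rewrite -hom_f gmulVg hom1. Qed.

Lemma hom_gcomm x y : f (gcomm x y) = gcomm (f x) (f y).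
Proof. by rewrite /gcomm !hom_f !homV. Qed.

Lemma hom_conjdiv w T S : f (conjdiv w T S) = conjdiv (f w) (f T) (f S).
Proof. by rewrite /conjdiv !hom_f !homV. Qed.

Lemma hom_inj : (forall x, f x = gone -> x = gone) -> injective f.
Proof.
move=> ker1 x y E; rewrite -[y]ginvK; apply: gmul_eq1V; apply: ker1.
by rewrite hom_f homV E gmulgV.
Qed.

End Homomorphisms.

Lemma hom_comp (G H K : group) (f : G -> H) (g : H -> K) :
  is_hom f -> is_hom g -> is_hom (g \o f).
Proof. by move=> hf hg x y /=; rewrite hf hg. Qed.

Lemma gconj_hom (G : group) (y : G) : is_hom (fun x => gconj x y).
Proof. by move=> x x'; rewrite /gconj -!gmulA gmulKVg. Qed.

(* Conjugating by [y] fixes [gcomm a b], since it multiplies [a] and [b] by central elements. *)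
Lemma gcommute_gcomm (G : group) (a b y : G) :
  gcentral (gcomm a y) -> gcentral (gcomm b y) -> gcommute (gcomm a b) y.
Proof.
move=> ca cb; apply: (@gmulI _ (ginv y)); rewrite gmulKg.
have /= := hom_gcomm (gconj_hom y) a b.
rewrite -[gconj a y]gmul_gcomm -[gconj b y]gmul_gcomm => conj_ab.
by rewrite -/(gconj (gcomm a b) y) conj_ab gcomm_mull_central // gcomm_mulr_central.
Qed.

Lemma hom_corestrict (H N G : group) (i : N -> G) (f : H -> G) :
  is_hom i -> injective i -> is_hom f -> (forall x, exists m, i m = f x) ->
  exists g : H -> N, is_hom g /\ forall x, i (g x) = f x.
Proof.
move=> hi inj_i hf f_in; pose g x := epsilon (inhabits gone) (fun m => i m = f x).
have gE x : i (g x) = f x by apply: epsilon_spec (f_in x).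
by exists g; split=> // x y; apply: inj_i; rewrite hi !gE hf.
Qed.

Section Products.
Variables (G : group) (I : eqType).

Definition gprod (F : I -> G) (s : seq I) : G :=
  foldr (fun m acc => gmul (F m) acc) gone s.

Lemma gprod_commute (F : I -> G) (y : G) s :
  (forall m, m \in s -> gcommute (F m) y) -> gcommute (gprod F s) y.
Proof.
elim: s => [|a s IHs] Fy /=; first exact: gcommute1.
apply: gcommuteM; first by apply: Fy; rewrite inE eqxx.
by apply: IHs => m sm; apply: Fy; rewrite inE sm orbT.
Qed.

Lemma gprodM (X Y : I -> G) s : uniq s ->
  (forall a b, a \in s -> b \in s -> a != b -> gcommute (Y a) (X b)) ->
  gprod (fun m => gmul (X m) (Y m)) s = gmul (gprod X s) (gprod Y s).
Proof.
elim: s => [|a s IHs] /=; first by rewrite gmul1g.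
case/andP => as_ us YX; rewrite IHs //; last first.
  by move=> c d sc sd; apply: YX; rewrite inE ?sc ?sd orbT.
have YaX : gcommute (Y a) (gprod X s).
  apply/gcommute_sym/gprod_commute => b sb; apply/gcommute_sym/YX.
  - by rewrite inE eqxx.
  - by rewrite inE sb orbT.
  - by apply: contraNneq as_ => ->.
by rewrite -!gmulA (gmulA (Y a)) YaX -gmulA.
Qed.

End Products.

Lemma hom_gprod (G H : group) (f : G -> H) (I : eqType) (F : I -> G) s :
  is_hom f -> f (gprod F s) = gprod (f \o F) s.
Proof. by move=> hf; elim: s => [|a s IHs] /=; rewrite ?hom1 // hf IHs. Qed.

Section Powers.
Variables (H : group) (n : nat).

Definition in_coord (j : 'I_n) (t : H) : gpower H n :=
  fun m => if m == j then t else gone.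

Lemma in_coord_hom j : is_hom (in_coord j).
Proof.
move=> x y; apply: functional_extensionality => m.
by rewrite /in_coord /= /pmul; case: (m == j); rewrite ?gmul1g.
Qed.

Lemma in_coord_inj j : injective (in_coord j).
Proof. by move=> x y /(congr1 (fun f => f j)); rewrite /in_coord eqxx. Qed.

Lemma gcomm_in_coord (k : gpower H n) j t :
  gcomm k (in_coord j t) = in_coord j (gcomm (k j) t).
Proof.
apply: functional_extensionality => m.
change (gcomm (k m) (in_coord j t m) = in_coord j (gcomm (k j) t) m).
by rewrite /in_coord; case: eqP => [-> | _]; rewrite ?gcommg1.
Qed.

Lemma gcomm_in_coord_neq (m m' : 'I_n) (x y : H) :
  m != m' -> gcomm (in_coord m x) (in_coord m' y) = gone.
Proof.
move=> mm'; rewrite gcomm_in_coord /in_coord eq_sym (negbTE mm') gcomm1g.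
exact: hom1 (in_coord_hom m').
Qed.

Lemma gprod_in_coord (x : gpower H n) :
  gprod (fun m => in_coord m (x m)) (enum 'I_n) = x.
Proof.
suff gprod_seq s : uniq s ->
    gprod (fun m => in_coord m (x m)) s = fun c => if c \in s then x c else gone.
  by rewrite gprod_seq ?enum_uniq //; apply: functional_extensionality => c; rewrite mem_enum.
elim: s => [_|a s IHs /andP[as_ us]]; first exact: functional_extensionality.
rewrite /= IHs //; apply: functional_extensionality => c.
rewrite /pmul /in_coord inE; case: (eqVneq c a) => [-> | _] /=.
  by rewrite (negbTE as_) gmulg1.
by rewrite gmul1g.
Qed.

Lemma gpower_neq1 (x : gpower H n) : x <> gone -> exists j, x j <> gone.
Proof.
move=> x1; apply: NNPP => no_j; apply: x1; apply: functional_extensionality => m.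
by apply: NNPP => xm; apply: no_j; exists m.
Qed.

Lemma gprod_hom (G : group) (phi : 'I_n -> H -> G) :
  (forall m, is_hom (phi m)) ->
  (forall m m' x y, m != m' -> gcommute (phi m x) (phi m' y)) ->
  is_hom (fun x : gpower H n => gprod (fun m => phi m (x m)) (enum 'I_n)).
Proof.
move=> hphi cphi x y; rewrite -gprodM ?enum_uniq //; last first.
  by move=> a b _ _ ab; apply: cphi.
by congr gprod; apply: functional_extensionality => m; apply: hphi.
Qed.

End Powers.

Lemma embeds0 (G : group) : embeds 0 G.
Proof.
exists (fun _ => gone); split; first by move=> x y; rewrite gmul1g.
by move=> x y _; apply: functional_extensionality => -[].
Qed.

Lemma embeds1 (G : group) (f : F2 -> G) : is_hom f -> injective f -> embeds 1 G.
Proof.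
move=> hf injf; exists (fun x => f (x ord0)); split; first by move=> x y; apply: hf.
move=> x y /injf xy; apply: functional_extensionality => m.
by rewrite (ord1 m).
Qed.

Lemma is_nu_exists (G : group) : exists x, is_nu G x.
Proof.
have [unbounded|] := classic (forall n, exists m, n <= m /\ embeds m G).
  by exists None.
move=> /not_all_ex_not[n no_m].
have bounded m : embeds m G -> m < n.
  by move=> Gm; rewrite ltnNge; apply/negP => nm; apply: no_m; exists m.
elim: n {no_m} bounded => [|n IHn] bounded; first by have := bounded 0 (embeds0 G).
have [Gn | nGn] := classic (embeds n G).
  by exists (Some n); split => // m /bounded.
apply: IHn => m Gm; have := bounded m Gm; rewrite ltnS leq_eqVlt.
by case/orP => // /eqP mn; case: nGn; rewrite -mn.
Qed.

Lemma nuP (G : group) : is_nu G (nu G).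
Proof. exact: epsilon_spec (is_nu_exists G). Qed.

Lemma is_nu_uniq (G : group) x y : is_nu G x -> is_nu G y -> x = y.
Proof.
have bounded_unbounded a : is_nu G (Some a) -> ~ is_nu G None.
  by move=> [_ le_a] /(_ a.+1) [m [am /le_a]]; rewrite leqNgt am.
case: x y => [a|] [b|] //.
- by move=> [Ga le_a] [Gb le_b]; rewrite (@anti_leq a b) // (le_b _ Ga) (le_a _ Gb).
- by move=> /bounded_unbounded.
- by move=> nuN /bounded_unbounded.
Qed.

Lemma le_nu (G H : group) :
  (forall n, embeds n G -> embeds n H) -> le_enat (nu G) (nu H).
Proof.
move=> GH; have := nuP G; have := nuP H.
case: (nu G) => [a|]; case: (nu H) => [b|] //= [_ le_b].
  by move=> [/GH Ha _]; apply: le_b.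
by move=> /(_ b.+1) [m [bm /GH /le_b]]; rewrite leqNgt bm.
Qed.

Lemma eq_nu (G H : group) : (forall n, embeds n G <-> embeds n H) -> nu G = nu H.
Proof.
move=> GH; apply: (@is_nu_uniq H); last exact: nuP.
have := nuP G; case: (nu G) => [a [Ga le_a]|unbounded] /=.
  by split=> [|m /GH]; [apply/GH | apply: le_a].
by move=> n; have [m [nm /GH Hm]] := unbounded n; exists m.
Qed.

Definition letter0 : letter := (false, false).

Definition nocancel (a b : seq letter) : bool :=
  head letter0 b != linv (last letter0 a).

Lemma reduced_sorted w : reduced w = sorted (fun x y => y != linv x) w.
Proof. by elim: w => [|x [|y w] IHw] //; move: IHw; rewrite /= => ->. Qed.

Lemma reduced_cat a b : a != [::] -> b != [::] ->
  reduced (a ++ b) = [&& reduced a, reduced b & nocancel a b].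
Proof.
case: a b => [|x a] [|y b] // _ _; elim: a x => [|x' a IHa] x.
  by rewrite /= andbC.
rewrite -[reduced _]/((x' != linv x) && reduced ((x' :: a) ++ y :: b)) IHa.
by rewrite /nocancel /= !andbA.
Qed.

Lemma reduced_catr a b : reduced (a ++ b) -> reduced b.
Proof. by elim: a => [|x a IHa] // /reduced_tail. Qed.

Lemma reduced_flatten (P : seq (seq letter)) :
  all (fun p => (p != [::]) && reduced p) P -> sorted nocancel P ->
  reduced (flatten P).
Proof.
elim: P => [|p [|q P] IHP] //=; first by rewrite cats0 => /andP[/andP[]].
move=> /andP[/andP[p0 rp] rqP] /andP[pq sqP].
have q0 : q != [::] by case/andP: rqP => /andP[].
rewrite reduced_cat ?rp ?IHP //=; last by case: (q) q0.
by case: (q) q0 pq.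
Qed.

Lemma wmul_cat u v : reduced (u ++ v) -> wmul u v = u ++ v.
Proof.
elim: u => [|x u IHu] //= ruv; rewrite IHu; last exact: reduced_tail ruv.
by case: (u ++ v) ruv => [|y w] //= /andP[/negbTE ->].
Qed.

Definition rinv (w : seq letter) : seq letter := rev (map linv w).

Lemma rinvK : involutive rinv.
Proof. by move=> w; rewrite /rinv map_rev revK -map_comp (eq_map linvK) map_id. Qed.

Lemma rinv_eq0 w : (rinv w == [::]) = (w == [::]).
Proof. by rewrite /rinv -size_eq0 size_rev size_map size_eq0. Qed.

Lemma head_rinv w : w != [::] -> head letter0 (rinv w) = linv (last letter0 w).
Proof. by case/lastP: w => // w x _; rewrite /rinv map_rcons rev_rcons last_rcons. Qed.

Lemma last_rinv w : w != [::] -> last letter0 (rinv w) = linv (head letter0 w).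
Proof. by case: w => // x w _; rewrite /rinv /= rev_cons last_rcons. Qed.

Lemma reduced_rinv w : reduced w -> reduced (rinv w).
Proof.
rewrite !reduced_sorted /rinv rev_sorted sorted_map; apply: sub_sorted => x y /=.
by rewrite linvK eq_sym.
Qed.

Lemma winv_rinv w : reduced w -> winv w = rinv w.
Proof. by move=> rw; rewrite /winv wmul_cat ?cats0 //; apply: reduced_rinv. Qed.

Definition gen (x : letter) : F2 := exist _ [:: x] isT.
Definition ga : F2 := gen (false, false).
Definition gb : F2 := gen (true, false).

Lemma reduced_sval (u : F2) : reduced (sval u).
Proof. exact: (svalP u). Qed.

Lemma F2_of_reduced w : reduced w -> exists u : F2, sval u = w.
Proof. by move=> rw; exists (exist _ w rw). Qed.

Lemma sval_gmul_cat (u v : F2) :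
  reduced (sval u ++ sval v) -> sval (gmul u v) = sval u ++ sval v.
Proof. exact: wmul_cat. Qed.

Lemma sval_ginv (u : F2) : sval (ginv u) = rinv (sval u).
Proof. exact/winv_rinv/reduced_sval. Qed.

Lemma F2_ind (P : F2 -> Prop) :
  P gone -> (forall x y, P y -> P (gmul (gen x) y)) -> forall y, P y.
Proof.
move=> P1 PM [w rw]; elim: w rw => [|x w IHw] rw.
  by have -> : exist _ [::] rw = gone :> F2 by apply: F2_eq.
have -> : exist _ (x :: w) rw = gmul (gen x) (exist _ w (reduced_tail rw)) :> F2.
  by apply: F2_eq; rewrite sval_gmul_cat.
exact/PM/IHw.
Qed.

Lemma eq_F2_hom (H : group) (f g : F2 -> H) : is_hom f -> is_hom g ->
  f ga = g ga -> f gb = g gb -> f =1 g.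
Proof.
move=> hf hg fga fgb; apply: F2_ind => [|[[] []] y fgy]; first by rewrite !hom1.
- have -> : gen (true, true) = ginv gb by apply: F2_eq.
  by rewrite hf hg fgy !homV // fgb.
- by rewrite hf hg fgy fgb.
- have -> : gen (false, true) = ginv ga by apply: F2_eq.
  by rewrite hf hg fgy !homV // fga.
- by rewrite hf hg fgy fga.
Qed.

Section Extension.
Variables (H : group) (A B : H).

Definition gen_img (x : letter) : H :=
  let e := if x.1 then B else A in if x.2 then ginv e else e.

Definition eval_word (w : seq letter) : H :=
  foldr (fun x acc => gmul (gen_img x) acc) gone w.

Definition F2ext (u : F2) : H := eval_word (sval u).

Lemma eval_word_wmul u v : eval_word (wmul u v) = gmul (eval_word u) (eval_word v).
Proof.
elim: u => [|x u IHu] /=; first by rewrite gmul1g.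
rewrite -gmulA -IHu; case: (wmul u v) => [|y w] //=; case: ifP => // /eqP ->.
by case: x => [[] []]; rewrite /gen_img /= ?gmulKg ?gmulKVg.
Qed.

Lemma F2ext_hom : is_hom F2ext.
Proof. by move=> x y; apply: eval_word_wmul. Qed.

Lemma F2ext_ga : F2ext ga = A.
Proof. exact: gmulg1. Qed.

Lemma F2ext_gb : F2ext gb = B.
Proof. exact: gmulg1. Qed.

End Extension.

Lemma F2_hom_commute (H : group) (f : F2 -> H) (y : H) : is_hom f ->
  gcommute (f ga) y -> gcommute (f gb) y -> forall x, gcommute (f x) y.
Proof.
move=> hf fa fb x; apply: gconj_eq.
apply: (@eq_F2_hom _ (fun x => gconj (f x) y) f) => //.
- exact: hom_comp hf (gconj_hom y).
- exact: gconj_id.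
- exact: gconj_id.
Qed.

(* Ping-pong: when no cancellation can occur between the blocks [u], [u^-1], [v], [v^-1],
   the image of a reduced word of length k is the concatenation of k blocks. *)
Lemma F2ext_inj (u v : F2) : sval u != [::] -> sval v != [::] ->
  uniq [:: head letter0 (sval u); linv (last letter0 (sval u));
           head letter0 (sval v); linv (last letter0 (sval v))] ->
  injective (F2ext u v).
Proof.
move=> u0 v0 uniq_ends; pose B a := sval (gen_img u v a).
have B0 a : B a != [::].
  by case: a => [[] []]; rewrite /B [gen_img _ _ _]/= ?sval_ginv ?rinv_eq0.
have BV a : B (linv a) = rinv (B a).
  by case: a => [[] []]; rewrite /B [gen_img _ _ _]/= ?sval_ginv ?rinvK.
have headB a : head letter0 (B a) =
    nth letter0 [:: head letter0 (sval u); linv (last letter0 (sval u));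
                    head letter0 (sval v); linv (last letter0 (sval v))] (a.1 * 2 + a.2).
  by case: a => [[] []]; rewrite /B [gen_img _ _ _]/= ?sval_ginv ?head_rinv.
have headB_inj : injective (fun a => head letter0 (B a)).
  move=> a b; rewrite /= !headB => /(uniqP letter0 uniq_ends).
  by case: a b => [[] []] [[] []] /(_ isT isT).
have nocancelB a b : b != linv a -> nocancel (B a) (B b).
  by rewrite /nocancel -head_rinv // -BV (inj_eq headB_inj).
have reduced_blocks w : reduced w -> reduced (flatten (map B w)).
  move=> rw; apply: reduced_flatten.
    by apply/allP => _ /mapP[a _ ->]; rewrite B0 reduced_sval.
  by rewrite sorted_map; move: rw; rewrite reduced_sorted; apply: sub_sorted.
have sval_F2ext w : reduced w -> sval (eval_word u v w) = flatten (map B w).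
  elim: w => [|a w IHw] // rw; have rw' := reduced_tail rw.
  rewrite -[eval_word _ _ _]/(gmul (gen_img u v a) (eval_word u v w)).
  by rewrite sval_gmul_cat IHw //; apply: (reduced_blocks (a :: w)).
apply: hom_inj; first exact: F2ext_hom.
move=> [w rw] /(congr1 sval); rewrite /F2ext /= sval_F2ext // => wB0.
apply: F2_eq => /=; case: w {rw} wB0 => [|a w] //=.
by case: (B a) (B0 a).
Qed.

Section ConjugateQuotient.
Variables (w T S : F2).
Hypotheses (w0 : sval w != [::]) (T0 : sval T != [::]) (S0 : sval S != [::]).
Hypothesis headT :
  head letter0 (sval T) \notin [:: head letter0 (sval w); linv (last letter0 (sval w))].
Hypothesis headS :
  head letter0 (sval S) \notin [:: head letter0 (sval w); linv (last letter0 (sval w))].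
Hypothesis lastTS : last letter0 (sval T) != last letter0 (sval S).

Let blocks := [:: rinv (sval T); sval w; sval T; rinv (sval S); rinv (sval w); sval S].

Lemma reduced_conjdiv_blocks : reduced (flatten blocks).
Proof.
apply: reduced_flatten.
  by rewrite /= !rinv_eq0 w0 T0 S0 !reduced_rinv ?reduced_sval.
move: headT headS; rewrite !inE !negb_or => /andP[Tw Tw'] /andP[Sw Sw'].
rewrite /= /nocancel !head_rinv // !last_rinv // !linvK (inj_eq (can_inj linvK)).
by rewrite eq_sym Tw Tw' eq_sym lastTS eq_sym Sw' Sw.
Qed.

Lemma sval_conjdiv : sval (conjdiv w T S) = flatten blocks.
Proof.
have R := reduced_conjdiv_blocks; rewrite /blocks /= cats0 in R *.
have R1 := reduced_catr R; have R2 := reduced_catr R1.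
have R3 := reduced_catr R2; have R4 := reduced_catr R3.
rewrite /conjdiv /= !winv_rinv ?reduced_sval //.
by rewrite (wmul_cat R4) (wmul_cat R3) (wmul_cat R2) (wmul_cat R1) (wmul_cat R).
Qed.

Lemma conjdiv_ends : [/\ sval (conjdiv w T S) != [::],
  head letter0 (sval (conjdiv w T S)) = linv (last letter0 (sval T)) &
  last letter0 (sval (conjdiv w T S)) = last letter0 (sval S)].
Proof.
rewrite sval_conjdiv /blocks /= cats0 -head_rinv //.
have := T0; rewrite -rinv_eq0; case: (rinv (sval T)) => // x r _.
by case: (sval S) S0 => // y s _; rewrite /= !last_cat.
Qed.

End ConjugateQuotient.

Lemma F2_free_conjdiv (w : F2) : w <> gone ->
  exists T1 S1 T2 S2 : F2, injective (F2ext (conjdiv w T1 S1) (conjdiv w T2 S2)).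
Proof.
move=> w1; have w0 : sval w != [::].
  by apply: contra_not_neq w1 => w_nil; apply: F2_eq.
(* Conjugators beginning with a letter [c] that avoids [head w] and [(last w)^-1] cause no
   cancellation, and the last letters c, d, d^-1, c^-1 of T1, S1, T2, S2 are distinct. *)
have [c cw] : exists c : letter,
    c \notin [:: head letter0 (sval w); linv (last letter0 (sval w))].
  case: (head _ _) (last _ _) => [f g] l; exists (~~ f, (~~ f, false) == linv l).
  by case: f g l => [] [] [[] []].
have [d [cd dlc ldlc uniq_lasts]] : exists d : letter,
    [/\ c != d, d != linv c, linv d != linv c & uniq [:: c; d; linv d; linv c]].
  by exists (~~ c.1, false); case: (c) => [[] []].
have [T1 T1E] := @F2_of_reduced [:: c] isT.
have [S1 S1E] : exists S1 : F2, sval S1 = [:: c; d].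
  by apply: F2_of_reduced; rewrite /= dlc.
have [T2 T2E] : exists T2 : F2, sval T2 = [:: c; linv d].
  by apply: F2_of_reduced; rewrite /= ldlc.
have [S2 S2E] : exists S2 : F2, sval S2 = [:: c; d; linv c].
  by apply: F2_of_reduced; rewrite /= dlc eq_sym ldlc.
have ends1 := @conjdiv_ends w T1 S1 w0; rewrite T1E S1E in ends1.
have [u0 hu lu] := ends1 isT isT cw cw cd.
have ends2 := @conjdiv_ends w T2 S2 w0; rewrite T2E S2E in ends2.
have [v0 hv lv] := ends2 isT isT cw cw ldlc.
exists T1, S1, T2, S2; apply: F2ext_inj => //.
by rewrite hu lu hv lv; move: uniq_lasts; rewrite -(map_inj_uniq (can_inj linvK)).
Qed.

Lemma gpower_ker_F2 n (Q : group) (h : gpower F2 n -> Q) (k : gpower F2 n) :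
  is_hom h -> h k = gone -> k <> gone ->
  exists phi : F2 -> gpower F2 n,
    [/\ is_hom phi, injective phi & forall x, h (phi x) = gone].
Proof.
move=> hh hk k1; have [j kj] := gpower_neq1 k1.
have [T1 [S1 [T2 [S2 inj_uv]]]] := F2_free_conjdiv kj.
pose H := h \o in_coord j; have hH : is_hom H := hom_comp (in_coord_hom j) hh.
have kj_central T : gcommute (H (k j)) (H T).
  apply: gcomm_eq1; rewrite -(hom_gcomm hH) /H /= -gcomm_in_coord (hom_gcomm hh) hk.
  exact: gcomm1g.
exists (in_coord j \o F2ext (conjdiv (k j) T1 S1) (conjdiv (k j) T2 S2)); split.
- exact: hom_comp (F2ext_hom _ _) (in_coord_hom j).
- by move=> x y /in_coord_inj /inj_uv.
- apply: (@eq_F2_hom _ (H \o F2ext _ _) (fun _ => gone)).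
  + exact: hom_comp (F2ext_hom _ _) hH.
  + by move=> x y; rewrite gmul1g.
  + by rewrite /= F2ext_ga (hom_conjdiv hH) conjdiv_eq1.
  + by rewrite /= F2ext_gb (hom_conjdiv hH) conjdiv_eq1.
Qed.

Lemma embeds_quotient (N G Q : group) (i : N -> G) (p : G -> Q) :
  short_exact i p -> ~ embeds 1 N -> forall n, embeds n G -> embeds n Q.
Proof.
move=> [hi hp inj_i _ ker_p] N1 n [f [hf inj_f]].
have hpf : is_hom (p \o f) := hom_comp hf hp.
exists (p \o f); split => //; apply: hom_inj => // k pfk; apply: NNPP => k1.
have [phi [hphi inj_phi ker_phi]] := gpower_ker_F2 hpf pfk k1.
have [psi [hpsi ipsi]] := hom_corestrict hi inj_i (hom_comp hphi hf)
  (fun x => (ker_p _).1 (ker_phi x)).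
by apply/N1/(embeds1 hpsi) => x y /(congr1 i); rewrite !ipsi => /inj_f /inj_phi.
Qed.

Lemma embeds_split (G Q : group) (p : G -> Q) :
  split_ext p -> forall n, embeds n Q -> embeds n G.
Proof.
move=> [s [hs ps]] n [g [hg inj_g]]; exists (s \o g); split; first exact: hom_comp.
by move=> x y /= /(congr1 p); rewrite !ps => /inj_g.
Qed.

Definition comm_embed : F2 -> F2 := F2ext (gcomm (ginv ga) (ginv gb)) (gcomm ga gb).

(* [a^-1, b^-1] = a b a^-1 b^-1, [a, b] = a^-1 b^-1 a b and their inverses begin with the four
   distinct letters a, a^-1, b, b^-1. *)
Lemma comm_embed_inj : injective comm_embed.
Proof. by apply: F2ext_inj; vm_compute. Qed.

Lemma gcommute_comm_embed (G : group) (f : F2 -> G) (y : G) : is_hom f ->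
  (forall x, gcentral (gcomm (f x) y)) -> forall x, gcommute (f (comm_embed x)) y.
Proof.
move=> hf central_fy; apply: (@F2_hom_commute _ (f \o comm_embed)).
- exact: hom_comp (F2ext_hom _ _) hf.
- by rewrite /= /comm_embed F2ext_ga (hom_gcomm hf); apply: gcommute_gcomm.
- by rewrite /= /comm_embed F2ext_gb (hom_gcomm hf); apply: gcommute_gcomm.
Qed.

Lemma central_lifts (N G Q : group) (i : N -> G) (p : G -> Q) n (g : gpower F2 n -> Q) :
  short_exact i p -> central_ext i -> is_hom g ->
  exists lift : 'I_n -> F2 -> G, [/\ forall m, is_hom (lift m),
    forall m x, p (lift m x) = g (in_coord m x) &
    forall m m' x y, m != m' -> gcentral (gcomm (lift m x) (lift m' y))].
Proof.
move=> [hi hp _ p_onto ker_p] i_central hg.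
pose s q := epsilon (inhabits gone) (fun y => p y = q).
have sK q : p (s q) = q by apply: epsilon_spec (p_onto q).
pose lift m := F2ext (s (g (in_coord m ga))) (s (g (in_coord m gb))).
have hlift m : is_hom (lift m) := F2ext_hom _ _.
have p_lift m x : p (lift m x) = g (in_coord m x).
  apply: (@eq_F2_hom _ (p \o lift m) (g \o in_coord m)).
  - exact: hom_comp.
  - exact: hom_comp (in_coord_hom m) hg.
  - by rewrite /comp /lift F2ext_ga sK.
  - by rewrite /comp /lift F2ext_gb sK.
exists lift; split=> // m m' x y mm'.
have : p (gcomm (lift m x) (lift m' y)) = gone.
  by rewrite (hom_gcomm hp) !p_lift -(hom_gcomm hg) gcomm_in_coord_neq // (hom1 hg).
by case/ker_p => z <-; apply: i_central.
Qed.

Lemma embeds_central (N G Q : group) (i : N -> G) (p : G -> Q) :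
  short_exact i p -> central_ext i -> forall n, embeds n Q -> embeds n G.
Proof.
move=> exact_ip i_central n [g [hg inj_g]]; have [_ hp _ _ _] := exact_ip.
have [lift [hlift p_lift lift_central]] := central_lifts exact_ip i_central hg.
pose Psi (x : gpower F2 n) := gprod (fun m => lift m (comm_embed (x m))) (enum 'I_n).
have p_Psi x : p (Psi x) = g (fun m => comm_embed (x m)).
  rewrite /Psi (hom_gprod _ _ hp) -[in RHS](gprod_in_coord (fun m => comm_embed (x m))).
  rewrite (hom_gprod _ _ hg); congr gprod; apply: functional_extensionality => m.
  by rewrite /= p_lift.
exists Psi; split.
  apply: (@gprod_hom _ _ _ (fun m => lift m \o comm_embed)) => [m | m m' x y mm'].
    exact: hom_comp (F2ext_hom _ _) (hlift m).
  by apply: (gcommute_comm_embed (hlift m)) => z; apply: lift_central.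
move=> x y /(congr1 p); rewrite !p_Psi => /inj_g cxy.
apply: functional_extensionality => m; apply: comm_embed_inj.
exact: (congr1 (fun f => f m) cxy).
Qed.

Theorem proposition2p4 (N G Q : group) (i : N -> G) (p : G -> Q) :
  short_exact i p ->
  nu N = Some 0 ->
  le_enat (nu G) (nu Q) /\
  ((split_ext p \/ central_ext i) -> nu G = nu Q).
Proof.
move=> exact_ip nuN; have N1 : ~ embeds 1 N by have := nuP N; rewrite nuN => -[_ le0] /le0.
have GQ := embeds_quotient exact_ip N1.
split=> [|split_or_central]; first exact: le_nu.
apply: eq_nu => n; split; first exact: GQ.
case: split_or_central => [/embeds_split | /(embeds_central exact_ip)]; exact.
Qed.
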